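(* Let $p$ be a well-formed cons-free program, and suppose $[\![p]\!](d_1,\dots,d_M)\mapsto b$ is obtained by a derivation tree $T$. Then for every judgement in $T$ of one of the forms $p,\gamma\vdash s\to w$, $p,\gamma\vdash^{\mathrm{if}} b',s_1,s_2\to w$, or $p\vdash^{\mathrm{call}} f\,v_1\cdots v_n\to w$, and for every expression $t$ such that (a) $w\unrhd t$, (b) $b'\unrhd t$, (c) $\gamma(x)\unrhd t$ for some variable $x$, or (d) $v_i\unrhd t$ for some $i$: if $t$ has the form $c\,b_1\cdots b_m$ with $c\in\mathcal{C}$, then $t\in\mathcal{B}^p_{d_1,\dots,d_M}$.
   Context: Types are built from a finite set $\mathcal{S}$ of sorts (containing $\mathsf{bool}$) by $\sigma ::= \iota \mid \sigma \times \tau \mid \sigma \Rightarrow \tau$, with $\Rightarrow$ right-associative. Type order: $\mathrm{ord}(\iota)=0$ for sorts, $\mathrm{ord}(\sigma\times\tau)=\max(\mathrm{ord}(\sigma),\mathrm{ord}(\tau))$, $\mathrm{ord}(\sigma\Rightarrow\tau)=\max(\mathrm{ord}(\sigma)+1,\mathrm{ord}(\tau))$. Write $\kappa$ for a type that is a sort or a product; every type is uniquely $\sigma_1\Rightarrow\cdots\Rightarrow\sigma_m\Rightarrow\kappa$. Syntax. Fix pairwise disjoint sets of variables, data constructors $\mathcal{C}$ (containing $\mathsf{true},\mathsf{false}$) and defined symbols $\mathcal{D}$. Patterns: $\ell ::= x \mid c\,\ell_1\cdots\ell_m$ ($c\in\mathcal{C}$). Expressions: $s ::= x \mid c \mid f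 \mid \mathsf{if}\ s_1\ \mathsf{then}\ s_2\ \mathsf{else}\ s_3 \mid \mathsf{choose}\ s_1\cdots s_n \mid (s,t) \mid s\,t$ (application left-associative). A program is a finite list of clauses $f\,\ell_1\cdots\ell_k = s$ with $f \in \mathcal{D}$; its main function $f_1$ is the defined symbol of the first clause. Sub-expressions: $s \unrhd t$ iff $s = t$ or $s \rhd t$, where $(s_1,s_2)\rhd t$, $\mathsf{if}\ s_1\ \mathsf{then}\ s_2\ \mathsf{else}\ s_3 \rhd t$ and $\mathsf{choose}\ s_1\cdots s_n\rhd t$ hold if $s_i \unrhd t$ for some $i$, and $s_1\,s_2 \rhd t$ holds if $s_1 \rhd t$ or $s_2 \unrhd t$. Typing. A program is well-typed if there is an assignment $\mathcal{F}$ of simple types to $\mathcal{C}\cup\mathcal{D}$ such that: $f_1 : \kappa_1\Rightarrow\cdots\Rightarrow\kappa_M\Rightarrow\kappa$ with all $\kappa_i,\kappa$ of order $0$; each $c\in\mathcal{C}$ has type $\kappa_1\Rightarrow\cdots\Rightarrow\kappa_m\Rightarrow\iota$ with $\iota$ a sort and all $\kappa_i$ of order $0$; and for every clause $f\,\ell_1\cdots\ell_k=s$, all variables of $s$ occur in the left-hand side, each variable occurs at most once in the left-hand side, and there is a type environment $\Gamma$ for the left-hand side variables under which both sides have the same type (standard simple typing). It is well-formed if moreover constructors always occur fully applied and all clauses with the same root $f$ have the same number $\mathrm{arity}(f)$ of arguments. Semantics. Data expressions $d ::= c\,d_1\cdots d_m \mid (d,d')$; values $v ::= d \mid (v,w)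 \mid f\,v_1\cdots v_n$ with $n<\mathrm{arity}(f)$; environments $\gamma$ map variables to values and $\ell\gamma$ is instantiation. Judgements $p,\gamma\vdash s\to w$, $p,\gamma\vdash^{\mathrm{if}} d,s_2,s_3\to w$ and $p\vdash^{\mathrm{call}} f\,v_1\cdots v_n\to w$ are derived by: $p,\gamma\vdash x\to\gamma(x)$; $p,\gamma\vdash f\to w$ if $p\vdash^{\mathrm{call}} f\to w$; $p,\gamma\vdash c\,s_1\cdots s_m\to c\,b_1\cdots b_m$ if $p,\gamma\vdash s_i\to b_i$ for all $i$; $p,\gamma\vdash(s,t)\to(v,w)$ if $p,\gamma\vdash s\to v$ and $p,\gamma\vdash t\to w$; $p,\gamma\vdash \mathsf{choose}\ s_1\cdots s_n\to w$ if $p,\gamma\vdash s_i\to w$ for some $i$; $p,\gamma\vdash\mathsf{if}\ s_1\ \mathsf{then}\ s_2\ \mathsf{else}\ s_3\to w$ if $p,\gamma\vdash s_1\to d$ and $p,\gamma\vdash^{\mathrm{if}} d,s_2,s_3\to w$, where $p,\gamma\vdash^{\mathrm{if}}\mathsf{true},s_2,s_3\to w$ if $p,\gamma\vdash s_2\to w$ and $p,\gamma\vdash^{\mathrm{if}}\mathsf{false},s_2,s_3\to w$ if $p,\gamma\vdash s_3\to w$; $p,\gamma\vdash s\,t\to w$ if $p,\gamma\vdash s\to f\,v_1\cdots v_n$, $p,\gamma\vdash t\to v_{n+1}$ and $p\vdash^{\mathrm{call}} f\,v_1\cdots v_{n+1}\to w$; $p\vdash^{\mathrm{call}} f\,v_1\cdots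 v_n\to f\,v_1\cdots v_n$ if $n<\mathrm{arity}(f)$; $p\vdash^{\mathrm{call}} f\,v_1\cdots v_k\to w$ if $p,\gamma\vdash s\to w$ where $f\,\ell_1\cdots\ell_k=s$ is the first clause of $p$ for which there is $\gamma$ with domain the left-hand side variables and $v_i=\ell_i\gamma$ for all $i$. Finally $[\![p]\!](d_1,\dots,d_M)\mapsto b$ holds iff there is a derivation tree (built with these rules) for $p,[x_1:=d_1,\dots,x_M:=d_M]\vdash f_1\,x_1\cdots x_M\to b$. Cons-freeness. A clause $f\,\ell_1\cdots\ell_k=s$ is cons-free if every $t$ with $s\unrhd t$ of the form $c\,s_1\cdots s_m$ with $c\in\mathcal{C}$ is a data expression or satisfies $\ell_i\unrhd t$ for some $i$; a program is cons-free if all its clauses are. $\mathcal{B}^p_{d_1,\dots,d_M}$ denotes the set of data expressions $d$ such that $d_i\unrhd d$ for some $i$, or $s\unrhd d$ for the right-hand side $s$ of some clause of $p$. *)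

From Stdlib Require Import List Arith.
Import ListNotations.

Inductive sort : Type := SBool | SName (n : nat).

Inductive ty : Type :=
| TSort (s : sort)
| TProd (a b : ty)
| TArr (a b : ty).

Fixpoint ord (t : ty) : nat :=
  match t with
  | TSort _ => 0
  | TProd a b => Nat.max (ord a) (ord b)
  | TArr a b => Nat.max (S (ord a)) (ord b)
  end.

Fixpoint arrows (args : list ty) (res : ty) : ty :=
  match args with
  | [] => res
  | a :: args' => TArr a (arrows args' res)
  end.

(* Variables and defined symbols are named by nat; they live in different
   syntactic categories of [expr], hence the three sets are disjoint. *)
Definition var := nat.
Definition fsym := nat.
Inductive ctor : Type := CTrue | CFalse | CName (n : nat).

Inductive pat : Type :=
| PVar (x : var)
| PCon (c : ctor) (ls : list pat).

Inductive expr : Type :=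
| EVar (x : var)
| ECon (c : ctor)
| EFun (f : fsym)
| EIf (s1 s2 s3 : expr)
| EChoose (ss : list expr)
| EPair (s t : expr)
| EApp (s t : expr).

Definition apps (s : expr) (ts : list expr) : expr := fold_left EApp ts s.

Fixpoint pat_to_expr (l : pat) : expr :=
  match l with
  | PVar x => EVar x
  | PCon c ls => apps (ECon c) (map pat_to_expr ls)
  end.

Fixpoint pat_vars (l : pat) : list var :=
  match l with
  | PVar x => [x]
  | PCon _ ls => (fix go (ls : list pat) : list var :=
                    match ls with [] => [] | l :: ls' => pat_vars l ++ go ls' end) ls
  end.

Record clause : Type := Clause { cl_f : fsym; cl_pats : list pat; cl_rhs : expr }.
Definition program := list clause.

Definition lhs_vars (cl : clause) : list var := concat (map pat_vars (cl_pats cl)).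
Definition lhs_expr (cl : clause) : expr :=
  apps (EFun (cl_f cl)) (map pat_to_expr (cl_pats cl)).

(** * Sub-expressions:  subeq s t  is  s |>= t,  strict s t  is  s |> t *)
Inductive subeq : expr -> expr -> Prop :=
| se_refl s : subeq s s
| se_strict s t : strict s t -> subeq s t
with strict : expr -> expr -> Prop :=
| st_pair1 s1 s2 t : subeq s1 t -> strict (EPair s1 s2) t
| st_pair2 s1 s2 t : subeq s2 t -> strict (EPair s1 s2) t
| st_if1 s1 s2 s3 t : subeq s1 t -> strict (EIf s1 s2 s3) t
| st_if2 s1 s2 s3 t : subeq s2 t -> strict (EIf s1 s2 s3) t
| st_if3 s1 s2 s3 t : subeq s3 t -> strict (EIf s1 s2 s3) t
| st_choose ss si t : In si ss -> subeq si t -> strict (EChoose ss) t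
| st_app1 s1 s2 t : strict s1 t -> strict (EApp s1 s2) t
| st_app2 s1 s2 t : subeq s2 t -> strict (EApp s1 s2) t.

Inductive var_in (x : var) : expr -> Prop :=
| vi_var : var_in x (EVar x)
| vi_if1 s1 s2 s3 : var_in x s1 -> var_in x (EIf s1 s2 s3)
| vi_if2 s1 s2 s3 : var_in x s2 -> var_in x (EIf s1 s2 s3)
| vi_if3 s1 s2 s3 : var_in x s3 -> var_in x (EIf s1 s2 s3)
| vi_choose ss s : In s ss -> var_in x s -> var_in x (EChoose ss)
| vi_pair1 s t : var_in x s -> var_in x (EPair s t)
| vi_pair2 s t : var_in x t -> var_in x (EPair s t)
| vi_app1 s t : var_in x s -> var_in x (EApp s t)
| vi_app2 s t : var_in x t -> var_in x (EApp s t).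

Section Typing.
Variable F : ctor -> ty.
Variable Fd : fsym -> ty.

Inductive has_type (G : var -> option ty) : expr -> ty -> Prop :=
| ht_var x T : G x = Some T -> has_type G (EVar x) T
| ht_con c : has_type G (ECon c) (F c)
| ht_fun f : has_type G (EFun f) (Fd f)
| ht_if s1 s2 s3 T : has_type G s1 (TSort SBool) -> has_type G s2 T ->
    has_type G s3 T -> has_type G (EIf s1 s2 s3) T
| ht_choose ss T : (forall s, In s ss -> has_type G s T) -> has_type G (EChoose ss) T
| ht_pair s t A B : has_type G s A -> has_type G t B -> has_type G (EPair s t) (TProd A B)
| ht_app s t A B : has_type G s (TArr A B) -> has_type G t A -> has_type G (EApp s t) B.

Definition well_typed_with (p : program) : Prop :=
  (exists cl rest args res, p = cl :: rest /\ Fd (cl_f cl) = arrows args res /\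
       Forall (fun k => ord k = 0) args /\ ord res = 0) /\
  (forall c, exists args s, F c = arrows args (TSort s) /\
       Forall (fun k => ord k = 0) args) /\
  F CTrue = TSort SBool /\ F CFalse = TSort SBool /\
  (forall cl, In cl p ->
     (forall x, var_in x (cl_rhs cl) -> In x (lhs_vars cl)) /\
     NoDup (lhs_vars cl) /\
     exists G T, has_type G (lhs_expr cl) T /\ has_type G (cl_rhs cl) T).

Fixpoint ty_nargs (T : ty) : nat :=
  match T with TArr _ b => S (ty_nargs b) | _ => 0 end.

(* [fa_expr e n]: every constructor in e is fully applied, given that e
   itself is applied to n further arguments. *)
Inductive fa_expr : expr -> nat -> Prop :=
| fa_var x n : fa_expr (EVar x) n
| fa_fun f n : fa_expr (EFun f) n
| fa_con c : fa_expr (ECon c) (ty_nargs (F c))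
| fa_if s1 s2 s3 n : fa_expr s1 0 -> fa_expr s2 0 -> fa_expr s3 0 -> fa_expr (EIf s1 s2 s3) n
| fa_choose ss n : (forall s, In s ss -> fa_expr s 0) -> fa_expr (EChoose ss) n
| fa_pair s t n : fa_expr s 0 -> fa_expr t 0 -> fa_expr (EPair s t) n
| fa_app s t n : fa_expr s (S n) -> fa_expr t 0 -> fa_expr (EApp s t) n.

Definition well_formed_with (p : program) : Prop :=
  well_typed_with p /\
  (forall cl, In cl p -> fa_expr (lhs_expr cl) 0 /\ fa_expr (cl_rhs cl) 0) /\
  (forall cl1 cl2, In cl1 p -> In cl2 p -> cl_f cl1 = cl_f cl2 ->
     length (cl_pats cl1) = length (cl_pats cl2)).
End Typing.

Definition well_typed (p : program) : Prop := exists F Fd, well_typed_with F Fd p.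
Definition well_formed (p : program) : Prop := exists F Fd, well_formed_with F Fd p.

Inductive is_data : expr -> Prop :=
| data_con c ds : Forall is_data ds -> is_data (apps (ECon c) ds)
| data_pair d d' : is_data d -> is_data d' -> is_data (EPair d d').

Definition clause_cons_free (cl : clause) : Prop :=
  forall t, subeq (cl_rhs cl) t ->
  forall c ss, t = apps (ECon c) ss ->
  is_data t \/ exists l, In l (cl_pats cl) /\ subeq (pat_to_expr l) t.

Definition cons_free (p : program) : Prop := forall cl, In cl p -> clause_cons_free cl.

Definition env := var -> option expr.

Fixpoint inst (g : env) (l : pat) : expr :=
  match l with
  | PVar x => match g x with Some v => v | None => EVar x end
  | PCon c ls => apps (ECon c) (map (inst g) ls)
  end.

Definition arity (p : program) (f : fsym) : nat :=
  match find (fun cl => Nat.eqb (cl_f cl) f) p with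
  | Some cl => length (cl_pats cl)
  | None => 0
  end.

Definition matches_with (cl : clause) (f : fsym) (vs : list expr) (g : env) : Prop :=
  cl_f cl = f /\ (forall x, g x <> None <-> In x (lhs_vars cl)) /\
  Forall2 (fun l v => inst g l = v) (cl_pats cl) vs.

Definition matches (cl : clause) (f : fsym) (vs : list expr) : Prop :=
  exists g, matches_with cl f vs g.

Inductive judg : Type :=
| JEval (g : env) (s w : expr)
| JIf (g : env) (d s2 s3 w : expr)
| JCall (f : fsym) (vs : list expr) (w : expr).

Inductive rule (p : program) : judg -> list judg -> Prop :=
| r_var g x v : g x = Some v -> rule p (JEval g (EVar x) v) []
| r_fun g f w : rule p (JEval g (EFun f) w) [JCall f [] w]
| r_con g c ss bs : length ss = length bs ->
    rule p (JEval g (apps (ECon c) ss) (apps (ECon c) bs))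
           (map (fun sb => JEval g (fst sb) (snd sb)) (combine ss bs))
| r_pair g s t v w : rule p (JEval g (EPair s t) (EPair v w)) [JEval g s v; JEval g t w]
| r_choose g ss si w : In si ss -> rule p (JEval g (EChoose ss) w) [JEval g si w]
| r_if g s1 s2 s3 d w :
    rule p (JEval g (EIf s1 s2 s3) w) [JEval g s1 d; JIf g d s2 s3 w]
| r_iftrue g s2 s3 w : rule p (JIf g (ECon CTrue) s2 s3 w) [JEval g s2 w]
| r_iffalse g s2 s3 w : rule p (JIf g (ECon CFalse) s2 s3 w) [JEval g s3 w]
| r_app g s t f vs v w :
    rule p (JEval g (EApp s t) w)
      [JEval g s (apps (EFun f) vs); JEval g t v; JCall f (vs ++ [v]) w]
| r_partial f vs : length vs < arity p f -> rule p (JCall f vs (apps (EFun f) vs)) []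
| r_call f vs w pre cl post g :
    p = pre ++ cl :: post ->
    (forall cl', In cl' pre -> ~ matches cl' f vs) ->
    matches_with cl f vs g ->
    rule p (JCall f vs w) [JEval g (cl_rhs cl) w].

Inductive dtree : Type := Node (j : judg) (ts : list dtree).

Definition droot (t : dtree) : judg := match t with Node j _ => j end.

Inductive valid (p : program) : dtree -> Prop :=
| valid_node j ts : rule p j (map droot ts) ->
    (forall t, In t ts -> valid p t) -> valid p (Node j ts).

Inductive occurs (j : judg) : dtree -> Prop :=
| occ_root ts : occurs j (Node j ts)
| occ_child j' ts t : In t ts -> occurs j t -> occurs j (Node j' ts).

(* input variables x_1..x_M are 0..M-1 *)
Definition init_env (ds : list expr) : env :=
  fun x => if x <? length ds then Some (nth x ds (EVar x)) else None.

Definition sem_tree (p : program) (ds : list expr) (b : expr) (T : dtree) : Prop :=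
  exists cl rest, p = cl :: rest /\ valid p T /\
    droot T = JEval (init_env ds)
                (apps (EFun (cl_f cl)) (map EVar (seq 0 (length ds)))) b.

Definition inB (p : program) (ds : list expr) (d : expr) : Prop :=
  is_data d /\
  ((exists di, In di ds /\ subeq di d) \/
   (exists cl, In cl p /\ subeq (cl_rhs cl) d)).

Definition judg_reaches (j : judg) (t : expr) : Prop :=
  match j with
  | JEval g s w => subeq w t \/ exists x v, g x = Some v /\ subeq v t
  | JIf g b' s2 s3 w => subeq w t \/ subeq b' t \/ exists x v, g x = Some v /\ subeq v t
  | JCall f vs w => subeq w t \/ exists v, In v vs /\ subeq v t
  end.

(* A value is safe when all its constructor-headed sub-expressions lie in B.
   Along the derivation, every judgement has safe inputs (environment, tested
   value, call arguments) and every expression being evaluated satisfies: each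
   constructor-headed sub-expression is in B or is a sub-pattern of the current
   clause, whose instance is a sub-value of a safe argument. Cons-freeness
   gives exactly this for right-hand sides, and it passes to sub-expressions,
   so the invariant flows down the tree. Outputs are then safe by induction
   upwards: data expressions evaluate to themselves and patterns to their
   instances. *)

From Stdlib Require Import List Arith.
Import ListNotations.

Lemma Forall2_In_l {A B} (R : A -> B -> Prop) xs ys x :
  Forall2 R xs ys -> In x xs -> exists y, In y ys /\ R x y.
Proof.
  induction 1 as [|x' y' xs ys Hxy _ IH]; [intros []|]; intros [<-|Hx]; simpl; eauto.
  destruct (IH Hx) as [y [? ?]]; eauto.
Qed.

Lemma Forall2_In_r {A B} (R : A -> B -> Prop) xs ys y :
  Forall2 R xs ys -> In y ys -> exists x, In x xs /\ R x y.
Proof.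
  induction 1 as [|x' y' xs ys Hxy _ IH]; [intros []|]; intros [<-|Hy]; simpl; eauto.
  destruct (IH Hy) as [x [? ?]]; eauto.
Qed.

Lemma Forall2_eq_map {A B} (f : A -> B) xs ys :
  Forall2 (fun x y => y = f x) xs ys -> ys = map f xs.
Proof. induction 1; simpl; congruence. Qed.

Fixpoint ehead (e : expr) : expr :=
  match e with EApp s _ => ehead s | _ => e end.

Fixpoint eargs (e : expr) : list expr :=
  match e with EApp s t => eargs s ++ [t] | _ => [] end.

Lemma apps_snoc h ts t : apps h (ts ++ [t]) = EApp (apps h ts) t.
Proof. unfold apps. now rewrite fold_left_app. Qed.

Lemma ehead_apps h ts : ehead (apps h ts) = ehead h.
Proof.
  induction ts as [|t ts IH] using rev_ind; [reflexivity|].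
  rewrite apps_snoc. exact IH.
Qed.

Lemma eargs_apps h ts : eargs (apps h ts) = eargs h ++ ts.
Proof.
  induction ts as [|t ts IH] using rev_ind.
  - now rewrite app_nil_r.
  - rewrite apps_snoc. simpl. now rewrite IH, app_assoc.
Qed.

Lemma apps_ehead_eargs e : apps (ehead e) (eargs e) = e.
Proof. induction e; simpl; auto. now rewrite apps_snoc, IHe1. Qed.

Lemma apps_ECon_inj c c' ss ss' :
  apps (ECon c) ss = apps (ECon c') ss' -> c = c' /\ ss = ss'.
Proof.
  intros E. split.
  - apply (f_equal ehead) in E. rewrite !ehead_apps in E. simpl in E. congruence.
  - apply (f_equal eargs) in E. now rewrite !eargs_apps in E.
Qed.

Ltac discriminate_heads :=
  match goal with
  | H : _ = _ |- _ =>
      apply (f_equal ehead) in H; rewrite ?ehead_apps in H; simpl in H; discriminate H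
  end.

Definition con_headed (t : expr) : Prop := exists c, ehead t = ECon c.

Lemma con_headed_iff t : con_headed t <-> exists c ss, t = apps (ECon c) ss.
Proof.
  split.
  - intros [c Hc]. exists c, (eargs t). now rewrite <- Hc, apps_ehead_eargs.
  - intros [c [ss ->]]. exists c. apply ehead_apps.
Qed.

Lemma not_con_headed_apps_EFun f vs : ~ con_headed (apps (EFun f) vs).
Proof. intros [c Hc]. rewrite ehead_apps in Hc. discriminate. Qed.

Scheme subeq_strict_ind := Induction for subeq Sort Prop
  with strict_subeq_ind := Induction for strict Sort Prop.
Combined Scheme subeq_strict_mutind from subeq_strict_ind, strict_subeq_ind.

Local Hint Constructors subeq strict : core.

Lemma subeq_strict_trans :
  (forall a b, subeq a b -> forall c, subeq b c -> subeq a c) /\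
  (forall a b, strict a b -> forall c, subeq b c -> strict a c).
Proof. apply subeq_strict_mutind; eauto. Qed.

Lemma subeq_trans a b c : subeq a b -> subeq b c -> subeq a c.
Proof. intros; eapply subeq_strict_trans; eauto. Qed.

Lemma strict_subeq_trans a b c : strict a b -> subeq b c -> strict a c.
Proof. intros; eapply subeq_strict_trans; eauto. Qed.

Lemma strict_apps_In h es e : In e es -> strict (apps h es) e.
Proof.
  induction es as [|e' es IH] using rev_ind; [intros []|].
  rewrite in_app_iff, apps_snoc. intros [He|[<-|[]]]; auto.
Qed.

Definition atomic (e : expr) : Prop :=
  match e with EVar _ | ECon _ | EFun _ => True | _ => False end.

Lemma atomic_not_strict e t : atomic e -> ~ strict e t.
Proof. intros Ha Hs. destruct Hs; exact Ha. Qed.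

Lemma strict_apps_inv h es t :
  atomic h -> strict (apps h es) t -> exists e, In e es /\ subeq e t.
Proof.
  intros Ha. induction es as [|e es IH] using rev_ind; intros Hs.
  - now apply atomic_not_strict in Hs.
  - rewrite apps_snoc in Hs. setoid_rewrite in_app_iff.
    inversion Hs; subst.
    + destruct (IH H2) as [e' [? ?]]; eauto.
    + exists e; simpl; auto.
Qed.

Fixpoint is_data_ind' (P : expr -> Prop)
  (HC : forall c ds, Forall P ds -> P (apps (ECon c) ds))
  (HP : forall d d', P d -> P d' -> P (EPair d d'))
  (d : expr) (H : is_data d) {struct H} : P d :=
  match H in is_data d return P d with
  | data_con c ds Hds => HC c ds
      ((fix go ds (Hds : Forall is_data ds) : Forall P ds :=
          match Hds with
          | Forall_nil _ => Forall_nil _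
          | @Forall_cons _ _ x l Hx Hl => Forall_cons x (is_data_ind' P HC HP x Hx) (go l Hl)
          end) ds Hds)
  | data_pair d d' H H' => HP d d' (is_data_ind' P HC HP d H) (is_data_ind' P HC HP d' H')
  end.

Lemma is_data_EApp s t : is_data (EApp s t) -> is_data s /\ is_data t.
Proof.
  inversion 1 as [c ds Hds E|]; subst. revert Hds E.
  destruct ds as [|d ds _] using rev_ind; intros Hds E; [discriminate|].
  rewrite apps_snoc in E. injection E as <- <-.
  apply Forall_app in Hds as [Hds Hd]. inversion Hd; subst.
  split; [constructor|]; assumption.
Qed.

Lemma is_data_subeq d t : subeq d t -> is_data d -> is_data t.
Proof.
  revert d t.
  apply (subeq_strict_ind (fun d t _ => is_data d -> is_data t)
                          (fun d t _ => is_data d -> is_data t));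
    intros; auto;
    match goal with
    | H : is_data (EApp _ _) |- _ => apply is_data_EApp in H as []; auto
    | H : is_data _ |- _ => inversion H; subst; auto; discriminate_heads
    end.
Qed.

Fixpoint pat_ind' (P : pat -> Prop) (HV : forall x, P (PVar x))
  (HC : forall c ls, (forall l, In l ls -> P l) -> P (PCon c ls)) (l : pat) : P l :=
  match l with
  | PVar x => HV x
  | PCon c ls => HC c ls
      ((fix go (ls : list pat) : forall l, In l ls -> P l :=
          match ls with
          | [] => fun l (H : In l []) => False_ind _ H
          | l0 :: ls' => fun l (H : In l (l0 :: ls')) =>
              match H with
              | or_introl E => eq_ind l0 P (pat_ind' P HV HC l0) l E
              | or_intror H' => go ls' l H'
              end
          end) ls)
  end.

Lemma pat_vars_PCon c ls : pat_vars (PCon c ls) = concat (map pat_vars ls).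
Proof. induction ls as [|l ls IH]; simpl in *; congruence. Qed.

Lemma inst_subeq_var g l x v :
  In x (pat_vars l) -> g x = Some v -> subeq (inst g l) v.
Proof.
  induction l as [y|c ls IH] using pat_ind'; intros Hx Hg.
  - destruct Hx as [<-|[]]. simpl. rewrite Hg. constructor.
  - rewrite pat_vars_PCon in Hx.
    apply in_concat in Hx as [xs [Hxs Hx]].
    apply in_map_iff in Hxs as [l [<- Hl]].
    apply se_strict. eapply strict_subeq_trans; [|apply (IH l Hl Hx Hg)].
    apply strict_apps_In, in_map, Hl.
Qed.

Lemma con_headed_subpattern g l t :
  subeq (pat_to_expr l) t -> con_headed t ->
  exists l', t = pat_to_expr l' /\ subeq (inst g l) (inst g l').
Proof.
  induction l as [y|c ls IH] using pat_ind'; intros Hs Ht.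
  - inversion Hs as [|? ? Hst]; subst.
    + destruct Ht as [c Hc]. discriminate.
    + contradiction (atomic_not_strict (EVar y) t I Hst).
  - inversion Hs as [|? ? Hst]; subst.
    + exists (PCon c ls). split; constructor.
    + apply strict_apps_inv in Hst as [e [He Hst]]; [|exact I].
      apply in_map_iff in He as [l [<- Hl]].
      destruct (IH l Hl Hst Ht) as [l' [-> Hl']].
      exists l'. split; [reflexivity|].
      apply se_strict. eapply strict_subeq_trans; [|exact Hl'].
      apply strict_apps_In, in_map, Hl.
Qed.

Inductive derivable (p : program) : judg -> Prop :=
| derivable_rule j prems :
    rule p j prems -> (forall j', In j' prems -> derivable p j') -> derivable p j.

Lemma valid_derivable p T : valid p T -> derivable p (droot T).
Proof.
  induction 1 as [j ts Hr _ IH].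
  apply (derivable_rule p j (map droot ts) Hr).
  intros j' Hj'. apply in_map_iff in Hj' as [t [<- Ht]]. auto.
Qed.

Lemma occurs_derivable p T j : valid p T -> occurs j T -> derivable p j.
Proof.
  intros Hv Ho. induction Ho as [ts|j' ts t Ht _ IH].
  - exact (valid_derivable p _ Hv).
  - inversion Hv; auto.
Qed.

Lemma con_premises_Forall2 (P : judg -> Prop) g ss bs :
  length ss = length bs ->
  (forall j, In j (map (fun sb => JEval g (fst sb) (snd sb)) (combine ss bs)) -> P j) ->
  Forall2 (fun s b => P (JEval g s b)) ss bs.
Proof.
  revert bs. induction ss as [|s ss IH]; intros [|b bs] Hl HP; try discriminate;
    constructor; simpl in *; auto.
Qed.



Lemma eval_con_headed p g s w :
  derivable p (JEval g s w) -> con_headed s -> con_headed w.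
Proof.
  intros H. remember (JEval g s w) as j eqn:Ej. revert g s w Ej.
  induction H as [j prems Hr _ IH]; intros g s w -> [c Hc].
  inversion Hr; subst; simpl in Hc; try discriminate Hc.
  - exists c. now rewrite ehead_apps in *.
  - exfalso. eapply not_con_headed_apps_EFun, IH;
      [left; reflexivity | reflexivity | exists c; exact Hc].
Qed.

Lemma eval_apps_ECon_inv p g c ss w :
  derivable p (JEval g (apps (ECon c) ss) w) ->
  exists bs, w = apps (ECon c) bs /\ Forall2 (fun s b => derivable p (JEval g s b)) ss bs.
Proof.
  inversion 1 as [? prems Hr Hprem]; subst.
  inversion Hr; subst; try discriminate_heads.
  - match goal with E : apps _ _ = apps _ _ |- _ => apply apps_ECon_inj in E as [-> ->] end.
    eexists. split; [reflexivity|]. now apply con_premises_Forall2.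
  - match goal with E : EApp ?s _ = apps _ _ |- _ =>
      apply (f_equal ehead) in E; rewrite ehead_apps in E end.
    exfalso. eapply not_con_headed_apps_EFun, eval_con_headed;
      [apply Hprem; left; reflexivity | eexists; eassumption].
Qed.

Lemma eval_pat p g l w : derivable p (JEval g (pat_to_expr l) w) -> w = inst g l.
Proof.
  revert w. induction l as [x|c ls IH] using pat_ind'; intros w H.
  - inversion H as [? ? Hr _]; subst.
    inversion Hr; subst; [|discriminate_heads].
    simpl. match goal with E : g x = Some _ |- _ => now rewrite E end.
  - apply eval_apps_ECon_inv in H as [bs [-> Hbs]]. simpl. f_equal.
    apply Forall2_eq_map. revert bs Hbs.
    induction ls as [|l ls IHls]; intros bs Hbs; inversion Hbs; subst; constructor.
    + apply IH; [left; reflexivity | assumption].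
    + apply IHls; [intros l0 Hl0; apply IH; right; exact Hl0 | assumption].
Qed.

Lemma eval_data p g d w : is_data d -> derivable p (JEval g d w) -> w = d.
Proof.
  intros Hd. revert w. induction Hd as [c ds IH|d d' IH IH'] using is_data_ind'; intros w H.
  - apply eval_apps_ECon_inv in H as [bs [-> Hbs]]. f_equal.
    rewrite <- (map_id ds). apply Forall2_eq_map. revert bs Hbs.
    induction IH as [|d ds Hd _ IHds]; intros bs Hbs; inversion Hbs; subst; constructor; auto.
  - inversion H as [? ? Hr Hprem]; subst. inversion Hr; subst; [discriminate_heads|].
    f_equal; [apply IH | apply IH']; apply Hprem; simpl; auto.
Qed.

Section Safety.

Variable p : program.
Variable ds : list expr.

Definition safe (v : expr) : Prop :=
  forall t, subeq v t -> con_headed t -> inB p ds t.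

Definition safe_env (g : env) : Prop := forall x v, g x = Some v -> safe v.

Definition safe_expr (g : env) (s : expr) : Prop :=
  forall t, subeq s t -> con_headed t ->
  inB p ds t \/ exists l, t = pat_to_expr l /\ safe (inst g l).

Definition safe_judg (j : judg) : Prop :=
  match j with
  | JEval g s _ => safe_env g /\ safe_expr g s
  | JIf g d s2 s3 _ => safe_env g /\ safe d /\ safe_expr g s2 /\ safe_expr g s3
  | JCall _ vs _ => forall v, In v vs -> safe v
  end.

Definition judg_out (j : judg) : expr :=
  match j with JEval _ _ w | JIf _ _ _ _ w | JCall _ _ w => w end.

Lemma safe_subeq v v' : safe v -> subeq v v' -> safe v'.
Proof. intros Hv Hs t Ht. apply Hv. eapply subeq_trans; eauto. Qed.

Lemma safe_apps_arg h vs v : safe (apps h vs) -> In v vs -> safe v.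
Proof. intros Hs Hv. eapply safe_subeq; [exact Hs|]. apply se_strict, strict_apps_In, Hv. Qed.

Lemma safe_args_snoc f vs v :
  safe (apps (EFun f) vs) -> safe v -> forall u, In u (vs ++ [v]) -> safe u.
Proof.
  intros Hf Hv u Hu. apply in_app_or in Hu as [Hu|[<-|[]]].
  - exact (safe_apps_arg _ _ _ Hf Hu).
  - exact Hv.
Qed.

Lemma strict_apps_safe h vs t :
  atomic h -> (forall v, In v vs -> safe v) -> strict (apps h vs) t -> con_headed t ->
  inB p ds t.
Proof.
  intros Ha Hvs Hs. apply strict_apps_inv in Hs as [v [Hv Hs]]; [|exact Ha].
  exact (Hvs v Hv t Hs).
Qed.

Lemma safe_apps_EFun f vs : (forall v, In v vs -> safe v) -> safe (apps (EFun f) vs).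
Proof.
  intros Hvs t Ht. inversion Ht as [|? ? Hs]; subst.
  - intros Hc. contradiction (not_con_headed_apps_EFun f vs Hc).
  - now apply (strict_apps_safe (EFun f) vs).
Qed.

Lemma safe_EPair v w : safe v -> safe w -> safe (EPair v w).
Proof.
  intros Hv Hw t Ht Hc. inversion Ht as [|? ? Hs]; subst.
  - destruct Hc as [c Hc]. discriminate.
  - inversion Hs; subst; auto.
Qed.

Lemma safe_expr_strict g s s' : safe_expr g s -> strict s s' -> safe_expr g s'.
Proof. intros Hs Hss' t Ht. apply Hs, se_strict. eapply strict_subeq_trans; eauto. Qed.

Lemma safe_judg_reaches j t :
  safe_judg j -> safe (judg_out j) -> judg_reaches j t -> con_headed t -> inB p ds t.
Proof.
  destruct j as [g s w|g d s2 s3 w|f vs w]; simpl.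
  - intros [Hg _] Hw [Ht|[x [v [Hx Ht]]]]; [apply Hw | eapply Hg]; eauto.
  - intros [Hg [Hd _]] Hw [Ht|[Ht|[x [v [Hx Ht]]]]]; [apply Hw | apply Hd | eapply Hg]; eauto.
  - intros Hvs Hw [Ht|[v [Hv Ht]]]; [apply Hw | eapply Hvs]; eauto.
Qed.

Lemma safe_eval_apps_ECon g c ss bs :
  derivable p (JEval g (apps (ECon c) ss) (apps (ECon c) bs)) ->
  safe_expr g (apps (ECon c) ss) -> (forall b, In b bs -> safe b) ->
  safe (apps (ECon c) bs).
Proof.
  intros Hder Hss Hbs t Ht Hc. inversion Ht as [|? ? Hs]; subst.
  - assert (Hcs : con_headed (apps (ECon c) ss)) by (apply con_headed_iff; eauto).
    destruct (Hss _ (se_refl _) Hcs) as [HB|[l [El Hl]]].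
    + now rewrite (eval_data p g _ _ (proj1 HB) Hder).
    + rewrite El in Hder. rewrite (eval_pat p g l _ Hder) in Hc |- *.
      exact (Hl _ (se_refl _) Hc).
  - now apply (strict_apps_safe (ECon c) bs).
Qed.

(* The head [s] of an application [s t] is not a sub-expression of it, so the
   safety of [s] has to come from the fact that it evaluates to a function. *)
Lemma safe_expr_app_head g s t f vs :
  derivable p (JEval g s (apps (EFun f) vs)) -> safe_expr g (EApp s t) -> safe_expr g s.
Proof.
  intros Hder Hst u Hu Hc. inversion Hu as [|? ? Hs]; subst.
  - contradiction (not_con_headed_apps_EFun f vs (eval_con_headed p g u _ Hder Hc)).
  - apply Hst; auto.
Qed.

Lemma safe_inst_match cl f vs g :
  matches_with cl f vs g -> (forall v, In v vs -> safe v) ->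
  forall l, In l (cl_pats cl) -> safe (inst g l).
Proof.
  intros [_ [_ Hm]] Hvs l Hl.
  destruct (Forall2_In_l _ _ _ _ Hm Hl) as [v [Hv <-]]. auto.
Qed.

Lemma safe_env_match cl f vs g :
  matches_with cl f vs g -> (forall v, In v vs -> safe v) -> safe_env g.
Proof.
  intros Hm Hvs x v Hx.
  assert (Hlhs : In x (lhs_vars cl)) by (apply (proj1 (proj2 Hm)); congruence).
  apply in_concat in Hlhs as [xs [Hxs Hx']]. apply in_map_iff in Hxs as [l [<- Hl]].
  eapply safe_subeq; [apply (safe_inst_match cl f vs g Hm Hvs l Hl)|].
  eapply inst_subeq_var; eauto.
Qed.

Lemma safe_init_env : Forall is_data ds -> safe_env (init_env ds).
Proof.
  intros Hds x v Hx t Ht Hc. unfold init_env in Hx.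
  destruct (x <? length ds) eqn:Hlt; [|discriminate].
  injection Hx as <-. apply Nat.ltb_lt in Hlt.
  pose proof (nth_In ds (EVar x) Hlt) as Hin.
  split; [|left; eauto].
  rewrite Forall_forall in Hds. eapply is_data_subeq; eauto.
Qed.

Lemma safe_expr_apps_EFun_vars g f xs : safe_expr g (apps (EFun f) (map EVar xs)).
Proof.
  intros t Ht Hc. exfalso. inversion Ht as [|? ? Hs]; subst.
  - exact (not_con_headed_apps_EFun f _ Hc).
  - apply strict_apps_inv in Hs as [e [He Hs]]; [|exact I].
    apply in_map_iff in He as [x [<- _]].
    inversion Hs as [|? ? Hx]; subst.
    + destruct Hc as [c Hc]. discriminate.
    + exact (atomic_not_strict (EVar x) t I Hx).
Qed.

Hypothesis p_cons_free : cons_free p.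

Lemma safe_expr_rhs cl f vs g :
  In cl p -> matches_with cl f vs g -> (forall v, In v vs -> safe v) ->
  safe_expr g (cl_rhs cl).
Proof.
  intros Hcl Hm Hvs t Ht Hc.
  destruct (proj1 (con_headed_iff t) Hc) as [c [ss Et]].
  destruct (p_cons_free cl Hcl t Ht c ss Et) as [Hd|[l [Hl Hlt]]].
  - left. split; [exact Hd|]. right. eauto.
  - right. destruct (con_headed_subpattern g l t Hlt Hc) as [l' [-> Hll']].
    exists l'. split; [reflexivity|].
    eapply safe_subeq; [apply (safe_inst_match cl f vs g Hm Hvs l Hl)|exact Hll'].
Qed.

Lemma safe_premises j prems :
  rule p j prems ->
  (forall j', In j' prems -> derivable p j' /\ (safe_judg j' -> safe (judg_out j'))) ->
  safe_judg j -> forall j', In j' prems -> safe_judg j'.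
Proof.
  intros Hr Hprem Hj. inversion Hr; subst; simpl in Hj.
  - intros _ [].
  - intros j' [<-|[]]. intros _ [].
  - destruct Hj as [Hg Hs]. intros j' Hj'.
    apply in_map_iff in Hj' as [[s b] [<- Hsb]]. split; [exact Hg|].
    eapply safe_expr_strict; [exact Hs|]. eapply strict_apps_In, in_combine_l, Hsb.
  - destruct Hj as [Hg Hs].
    intros j' [<-|[<-|[]]]; (split; [exact Hg|]); eapply safe_expr_strict; eauto.
  - destruct Hj as [Hg Hs].
    intros j' [<-|[]]; (split; [exact Hg|]); eapply safe_expr_strict; eauto.
  - destruct Hj as [Hg Hs].
    assert (Hs1 : safe_judg (JEval g s1 d))
      by (split; [exact Hg|]; eapply safe_expr_strict; eauto).
    intros j' [<-|[<-|[]]]; [exact Hs1|].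
    split; [exact Hg|split; [|split; eapply safe_expr_strict; eauto]].
    apply (Hprem (JEval g s1 d)); simpl; auto.
  - intros j' [<-|[]]. simpl. tauto.
  - intros j' [<-|[]]. simpl. tauto.
  - destruct Hj as [Hg Hst].
    destruct (Hprem (JEval g s (apps (EFun f) vs))) as [Hder1 Hout1]; [simpl; auto|].
    assert (Hs1 : safe_judg (JEval g s (apps (EFun f) vs)))
      by (split; [exact Hg|]; eapply safe_expr_app_head; eauto).
    assert (Hs2 : safe_judg (JEval g t v))
      by (split; [exact Hg|]; eapply safe_expr_strict; eauto).
    intros j' [<-|[<-|[<-|[]]]]; [exact Hs1 | exact Hs2 |].
    refine (safe_args_snoc f vs v (Hout1 Hs1) _).
    apply (Hprem (JEval g t v)); simpl; auto.
  - intros _ [].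
  - intros j' [<-|[]]. split.
    + eapply safe_env_match; eauto.
    + match goal with Ep : p = _ ++ cl :: _ |- _ =>
        eapply safe_expr_rhs;
          [rewrite Ep; apply in_or_app; simpl; auto | eassumption | exact Hj]
      end.
Qed.

Lemma safe_conclusion j prems :
  rule p j prems -> derivable p j -> safe_judg j ->
  (forall j', In j' prems -> safe (judg_out j')) -> safe (judg_out j).
Proof.
  intros Hr Hder Hj Hprem. inversion Hr; subst; simpl in Hj |- *;
    (* most rules return the output of one of their premises *)
    try match type of Hprem with
        | forall j', In j' ?l -> _ =>
            match l with context [?j' :: _] => exact (Hprem j' ltac:(simpl; tauto)) end
        end.
  - eapply (proj1 Hj); eauto.
  - eapply safe_eval_apps_ECon; [exact Hder | exact (proj2 Hj) |].
    intros b Hb. apply (con_premises_Forall2 (fun j => safe (judg_out j))) in Hprem; auto.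
    destruct (Forall2_In_r _ _ _ _ Hprem Hb) as [s [_ Hs]]. exact Hs.
  - apply safe_EPair; [apply (Hprem (JEval g s v)) | apply (Hprem (JEval g t w))]; simpl; auto.
  - now apply safe_apps_EFun.
Qed.

Lemma derivable_safe j : derivable p j -> safe_judg j -> safe (judg_out j).
Proof.
  intros Hder. induction Hder as [j prems Hr Hprems IH]. intros Hj.
  apply (safe_conclusion j prems Hr); [econstructor; eauto | exact Hj |].
  intros j' Hj'. apply IH; [exact Hj'|].
  eapply safe_premises; eauto.
Qed.

Lemma occurs_safe_judg T j : valid p T -> safe_judg (droot T) -> occurs j T -> safe_judg j.
Proof.
  intros Hv Hroot Ho. induction Ho as [ts|j' ts t Ht _ IH]; [exact Hroot|].
  inversion Hv as [? ? Hr Hts]; subst.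
  apply IH; [auto|].
  apply (safe_premises j' (map droot ts) Hr); [|exact Hroot | apply in_map, Ht].
  intros j'' Hj''. apply in_map_iff in Hj'' as [t' [<- Ht']].
  pose proof (valid_derivable p t' (Hts t' Ht')) as Hder.
  split; [exact Hder | apply derivable_safe, Hder].
Qed.

End Safety.

Theorem lemma2 :
  forall (p : program) (ds : list expr) (b : expr) (T : dtree),
    well_formed p -> cons_free p ->
    Forall is_data ds ->
    sem_tree p ds b T ->
    forall j, occurs j T ->
    forall t, judg_reaches j t ->
    forall c bs, t = apps (ECon c) bs ->
    inB p ds t.
Proof.
  intros p ds b T _ Hcf Hds [cl [rest [_ [Hv Hroot]]]] j Hj t Ht c bs Et.
  assert (Hsafe_root : safe_judg p ds (droot T)).
  { rewrite Hroot. split; [apply safe_init_env, Hds | apply safe_expr_apps_EFun_vars]. }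
  assert (Hsafe_j : safe_judg p ds j)
    by exact (occurs_safe_judg p ds Hcf T j Hv Hsafe_root Hj).
  apply (safe_judg_reaches p ds j t Hsafe_j); [|exact Ht | apply con_headed_iff; eauto].
  apply (derivable_safe p ds Hcf); [eapply occurs_derivable; eauto | exact Hsafe_j].
Qed.
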